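(* Let $C\in\mathbb R^{d\times d}$ satisfy Condition A, let $m\ge1$, and let $D^{(m)}\in F^{(m)}$ have a rank-1 decomposition $D^{(m)}=\sum_{k=1}^s\lambda_kv_k^{\otimes m}$ with $s$ equal to the symmetric rank of $D^{(m)}$, $\lambda_k\in\mathbb R$, $v_k\in\mathbb R^d$. Let $D^{(m)}(t)$, $t\ge0$, be the solution of $$\dot D^{(m)}_\alpha=-\sum_{j,l=1}^d\alpha_jC_{jl}\,D^{(m)}_{(\alpha^{(j-)})^{(l+)}},\qquad\alpha\in S^{(m)},$$ with $D^{(m)}(0)=D^{(m)}$. Then $$D^{(m)}(t)=\sum_{k=1}^s\lambda_k[v_k(t)]^{\otimes m},\qquad t>0,$$ where $v_k(t)\in\mathbb R^d$ solves $\dot v_k=-Cv_k$, $v_k(0)=v_k$. Moreover, $D^{(m)}(t)$ has symmetric rank $s$ for all $t>0$.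
   Context: $C_S=\frac12(C+C^T)$; Condition A: $C_S$ positive semi-definite and no non-trivial $C^T$-invariant subspace of $\ker C_S$. $F^{(m)}$ is the space of symmetric $m$-tensors over $\mathbb R^d$ (arrays $(A_{i_1\dots i_m})_{i_r\in\{1,\dots,d\}}$ invariant under permutations of indices). $S^{(m)}=\{\alpha\in\mathbb N_0^d:|\alpha|=m\}$; for $A\in F^{(m)}$ and $\alpha\in S^{(m)}$, $A_\alpha:=A_{i_1\dots i_m}$ for any index with $\#\{r:i_r=k\}=\alpha_k$ for all $k$. For $\alpha\in\mathbb N_0^d$: $\alpha^{(l\pm)}_j=\alpha_j$ ($j\ne l$), $\alpha^{(l\pm)}_l=(\alpha_l\pm1)_+$. $v^{\otimes m}$ is the tensor with entries $v_{i_1}\cdots v_{i_m}$. The symmetric rank of $A\in F^{(m)}$ is the minimal $s$ such that $A=\sum_{k=1}^s\lambda_kv_k^{\otimes m}$ with real $\lambda_k$ and $v_k\in\mathbb R^d$ (such decompositions always exist). *)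

From HB Require Import structures.
From mathcomp Require Import all_boot all_order all_algebra.
From mathcomp Require Import all_classical all_reals all_analysis.
Set Implicit Arguments.
Unset Strict Implicit.
Unset Printing Implicit Defensive.
Import Order.TTheory GRing.Theory Num.Theory.
Local Open Scope ring_scope.

Section Defs.
Variable R : realType.

Definition symS d (C : 'M[R]_d) : 'M[R]_d := 2%:R^-1 *: (C + C^T).

(* Vectors of R^d are written as row vectors x; the column
   vector C^T x^T corresponds to the row vector x *m C, and the kernel of
   the symmetric matrix C_S is the row kernel kermx C_S.  A subspace is the
   row space of a square matrix U; it is trivial iff U = 0. *)
Definition conditionA d (C : 'M[R]_d) : Prop :=
  (forall x : 'rV[R]_d, 0 <= (x *m symS C *m x^T) 0 0) /\
  (forall U : 'M[R]_d,
      (U <= kermx (symS C))%MS -> (U *m C <= U)%MS -> U = 0).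

Definition tensor d := seq 'I_d -> R.

Definition symtensor d (m : nat) (A : tensor d) : Prop :=
  (forall s, size s <> m -> A s = 0) /\
  (forall s t, perm_eq s t -> A s = A t).

Definition mindex d := 'I_d -> nat.
Definition in_S d (m : nat) (a : mindex d) : Prop := (\sum_(k < d) a k)%N = m.

Definition rep d (a : mindex d) : seq 'I_d :=
  flatten [seq nseq (a k) k | k <- enum 'I_d].

Definition tcoord d (A : tensor d) (a : mindex d) : R := A (rep a).

Definition incr d (a : mindex d) (l : 'I_d) : mindex d :=
  fun k => if k == l then (a k).+1 else a k.
Definition decr d (a : mindex d) (l : 'I_d) : mindex d :=
  fun k => if k == l then (a k).-1 else a k.

Definition tpow d (m : nat) (v : 'I_d -> R) : tensor d :=
  fun s => if size s == m then \prod_(i <- s) v i else 0.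

Definition decomp d (m s : nat) (lam : 'I_s -> R) (v : 'I_s -> 'I_d -> R)
  : tensor d := fun x => \sum_(k < s) lam k * tpow m (v k) x.

Definition has_symrank d (m : nat) (A : tensor d) (s : nat) : Prop :=
  (exists (lam : 'I_s -> R) (v : 'I_s -> 'I_d -> R), A = decomp m lam v) /\
  (forall s' (lam : 'I_s' -> R) (v : 'I_s' -> 'I_d -> R),
      A = decomp m lam v -> (s <= s')%N).

Definition tens_rhs d (C : 'M[R]_d) (A : tensor d) (a : mindex d) : R :=
  - \sum_(j < d) \sum_(l < d) (a j)%:R * C j l * tcoord A (incr (decr a j) l).

Definition vec_rhs d (C : 'M[R]_d) (v : 'I_d -> R) : 'I_d -> R :=
  fun i => - \sum_(j < d) C i j * v j.

End Defs.

(* The map v |-> v^{(x)m} intertwines the flow of dv/dt = -Cv with the tensor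
   ODE: the alpha-coordinate of sum_k lam_k v_k(t)^{(x)m} is
   sum_k lam_k v_k(t)^alpha, and differentiating the monomial v^alpha along
   dv/dt = -Cv gives exactly the right-hand side of the tensor ODE.  Both ODEs
   are linear with constant coefficients, so a Gronwall estimate on the energy
   sum_b W_b^2 gives uniqueness forwards from the limit at 0+ and backwards
   from any time t > 0.  Forward uniqueness identifies D(t) with the
   decomposition.  Backward uniqueness shows that every linear relation among
   the v_k(t) already holds among the v_k, so v_k = P v_k(t) for a linear map P;
   applying P^{(x)m} to a decomposition of D(t) with s' terms yields one of D(0)
   with s' terms, whence s <= s'. *)

From HB Require Import structures.
From mathcomp Require Import all_boot all_order all_algebra.
From mathcomp Require Import all_classical all_reals all_analysis.
From mathcomp Require Import ring lra.
Import Order.TTheory GRing.Theory Num.Theory.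
Import numFieldNormedType.Exports.
Local Open Scope classical_set_scope.
Local Open Scope ring_scope.
Set Implicit Arguments.
Unset Strict Implicit.
Unset Printing Implicit Defensive.

Section Calculus.
Variable R : realType.

Lemma is_derive_bigsum (I : Type) (r : seq I) (F : I -> R -> R) (dF : I -> R) (t : R) :
  (forall i, is_derive t 1 (F i) (dF i)) ->
  is_derive t 1 (fun u => \sum_(i <- r) F i u) (\sum_(i <- r) dF i).
Proof.
move=> dFi; rewrite (_ : (fun u => _) = \sum_(i <- r) F i); last first.
  by apply/funext => u; rewrite fct_sumE.
by elim/big_ind2 : _ => // *; [exact: is_derive_cst | exact: is_deriveD].
Qed.

Lemma is_derive_bigprod (I : eqType) (r : seq I) (F : I -> R -> R) (dF : I -> R) (t : R) :
  uniq r -> (forall i, is_derive t 1 (F i) (dF i)) ->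
  is_derive t 1 (fun u => \prod_(i <- r) F i u)
    (\sum_(j <- r) dF j * \prod_(i <- r | i != j) F i t).
Proof.
move=> + dFi; elim: r => [_|x r IH /= /andP[xr ur]].
  rewrite (_ : (fun u => _) = cst 1); last by apply/funext => u; rewrite big_nil.
  by rewrite big_nil; exact: is_derive_cst.
rewrite (_ : (fun u => _) = F x * (fun u => \prod_(i <- r) F i u)); last first.
  by apply/funext => u; rewrite big_cons.
apply: is_derive_eq; first exact: is_deriveM (dFi x) (IH ur).
have notx j : j \in r -> (x != j) by apply: contraTneq => <-.
have prod_r : \prod_(i <- r | i != x) F i t = \prod_(i <- r) F i t.
  rewrite big_seq_cond [RHS]big_seq_cond; apply: eq_bigl => i.
  by case: (boolP (i \in r)) => //= /notx; rewrite eq_sym.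
have sum_r : \sum_(j <- r) dF j * \prod_(i <- x :: r | i != j) F i t =
             F x t * \sum_(j <- r) dF j * \prod_(i <- r | i != j) F i t.
  by rewrite mulr_sumr; apply: eq_big_seq => j jr; rewrite big_cons notx // mulrCA.
by rewrite big_cons [\prod_(_ <- _ :: _ | _) _]big_cons eqxx prod_r sum_r /GRing.scale /=; ring.
Qed.

Lemma is_deriveMl (c : R) (f : R -> R) (df t : R) :
  is_derive t 1 f df -> is_derive t 1 (fun u => c * f u) (c * df).
Proof.
by rewrite (_ : (fun u => c * f u) = c *: f) //; exact: is_deriveZ.
Qed.

Lemma gronwall_nonincr (c : R) (f df : R -> R) (a b : R) : 0 < a -> a <= b ->
  (forall t : R, 0 < t -> is_derive t 1 f (df t)) -> (forall t : R, 0 < t -> df t <= c * f t) ->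
  f b * expR (- (c * b)) <= f a * expR (- (c * a)).
Proof.
move=> a0 ab f' df_le.
pose g t := f t * expR (- (c * t)).
have g' (t : R) : 0 < t -> is_derive t 1 g (expR (- (c * t)) * (df t - c * f t)).
  move=> t0; apply: is_derive_eq.
    apply: is_deriveM (f' t t0) (is_derive1_comp (is_derive_expR _) _).
  by rewrite /comp /GRing.scale /= mulr1; ring.
have pos (x : R) : x \in `[a, b] -> 0 < x.
  by rewrite in_itv /= => /andP[ax _]; apply: lt_le_trans ax.
have g_cont : {within `[a, b], continuous g}.
  apply: derivable_within_continuous => x /pos x0.
  by case: (g' x x0).
have [x xab] := MVT_segment ab (fun x xi => g' x (pos x (subset_itv_oo_cc xi))) g_cont.
rewrite -[_ * expR _]/(g b) -[f a * _]/(g a) -subr_le0 => ->.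
rewrite mulr_le0_ge0 ?subr_ge0 // pmulr_rle0 ?expR_gt0 // subr_le0.
exact: df_le (pos x xab).
Qed.

Lemma gronwall_eq0 (K : R) (f df : R -> R) : 0 <= K ->
  (forall t : R, 0 < t -> is_derive t 1 f (df t)) -> (forall t : R, 0 < t -> df t <= K * f t) ->
  (forall t : R, 0 < t -> 0 <= f t) -> f x @[x --> 0^'+] --> 0 ->
  forall t : R, 0 < t -> f t = 0.
Proof.
move=> K0 f' df_le f_ge0 f_lim t t0.
suff : f t * expR (- (K * t)) <= 0.
  by rewrite pmulr_lle0 ?expR_gt0 // => ft; apply/eqP; rewrite eq_le ft f_ge0.
apply/ler_addgt0Pr => e e0; rewrite add0r.
have : \forall x \near 0^'+, (0 < x /\ x < t) /\ `|0 - f x| < e.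
  apply: filterI; last exact: cvgr_dist_lt f_lim e e0.
  by apply: filterI; [exact: nbhs_right_gt | exact: nbhs_right_lt].
move=> /filter_ex[x [[x0 xt]]]; rewrite sub0r normrN ger0_norm ?f_ge0 // => fx.
apply: le_trans (gronwall_nonincr x0 (ltW xt) f' df_le) _.
apply/ltW/le_lt_trans/fx; rewrite ler_piMr ?f_ge0 //.
by rewrite expR_le1 oppr_le0 mulr_ge0 // ltW.
Qed.

Lemma gronwall_eq0_backward (K : R) (f df : R -> R) :
  (forall t : R, 0 < t -> is_derive t 1 f (df t)) -> (forall t : R, 0 < t -> - (K * f t) <= df t) ->
  (forall t : R, 0 < t -> 0 <= f t) ->
  forall a b : R, 0 < a -> a <= b -> f b = 0 -> f a = 0.
Proof.
move=> f' df_ge f_ge0 a b a0 ab fb.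
have := @gronwall_nonincr (- K) (fun u => - f u) (fun u => - df u) a b a0 ab.
rewrite fb oppr0 mul0r mulNr oppr_ge0 pmulr_lle0 ?expR_gt0 // => fa.
apply/eqP; rewrite eq_le f_ge0 // andbT; apply: fa.
- by move=> t t0; exact: is_deriveN (f' t t0).
- by move=> t t0; rewrite mulrNN lerNl; exact: df_ge.
Qed.
End Calculus.

Section LinearSystem.
Variables (R : realType) (I P : finType).
Variables (W dW : I -> R -> R) (N : I -> P -> R) (g : I -> P -> I).
Hypothesis W_derive : forall t : R, 0 < t -> forall b, is_derive t 1 (W b) (dW b t).
Hypothesis N_ge0 : forall b p, 0 <= N b p.
Hypothesis dW_le :
  forall t : R, 0 < t -> forall b, `|dW b t| <= \sum_p N b p * `|W (g b p) t|.

Let energy (t : R) := \sum_b W b t ^+ 2.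
Let denergy (t : R) := \sum_b 2 * W b t * dW b t.
Let K := 2 * \sum_b \sum_p N b p.

Let energy_ge0 (t : R) : 0 <= energy t.
Proof. by apply: sumr_ge0 => b _; exact: sqr_ge0. Qed.

Let sqr_le_energy (t : R) b : W b t ^+ 2 <= energy t.
Proof. by rewrite /energy (bigD1 b) //= lerDl sumr_ge0 // => c _; exact: sqr_ge0. Qed.

Let eq0_of_energy (t : R) : energy t = 0 -> forall b, W b t = 0.
Proof.
move=> E0 b; apply/eqP; rewrite -sqrf_eq0; apply/eqP.
by apply: (psumr_eq0P (fun c _ => sqr_ge0 (W c t)) E0).
Qed.

Let is_derive_energy (t : R) : 0 < t -> is_derive t 1 energy (denergy t).
Proof.
move=> t0; apply: is_derive_bigsum => b.
rewrite (_ : (fun u => W b u ^+ 2) = W b * W b); last first.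
  by apply/funext => u; rewrite expr2.
apply: is_derive_eq; first exact: is_deriveM (W_derive t0 b) (W_derive t0 b).
by rewrite /GRing.scale /=; ring.
Qed.

Let norm_denergy_le (t : R) : 0 < t -> `|denergy t| <= K * energy t.
Proof.
move=> t0; apply: le_trans (ler_norm_sum _ _ _) _.
have -> : K * energy t = \sum_b \sum_p 2 * N b p * energy t.
  rewrite /K -mulrA mulr_suml mulr_sumr; apply: eq_bigr => b _.
  by rewrite mulr_suml mulr_sumr; apply: eq_bigr => p _; rewrite mulrA.
apply: ler_sum => b _; rewrite normrM normrM ger0_norm //.
apply: le_trans (ler_wpM2l _ (dW_le t0 b)) _; first exact: mulr_ge0.
rewrite mulr_sumr; apply: ler_sum => p _.
have WW : `|W b t| * `|W (g b p) t| <= energy t.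
  apply: le_trans (leif_le (leif_mean_square _ _)) _.
  have := sqr_le_energy t b; have := sqr_le_energy t (g b p).
  rewrite !real_normK ?num_real //; lra.
have -> : 2 * `|W b t| * (N b p * `|W (g b p) t|) =
          2 * N b p * (`|W b t| * `|W (g b p) t|) by ring.
by rewrite ler_wpM2l // mulr_ge0.
Qed.

Lemma linear_system_eq0 : (forall b, W b x @[x --> 0^'+] --> 0) ->
  forall t : R, 0 < t -> forall b, W b t = 0.
Proof.
move=> W_lim t t0; apply: eq0_of_energy.
apply: (gronwall_eq0 (K := K) _ is_derive_energy _ _ _ t0).
- by rewrite /K mulr_ge0 // sumr_ge0 // => b _; exact: sumr_ge0.
- by move=> u u0; apply: le_trans (ler_norm _) (norm_denergy_le u0).
- by move=> u _; exact: energy_ge0.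
- have sum0 : \sum_(b : I) (0 : R) ^+ 2 = 0 by rewrite big1 // => b _; rewrite expr0n.
  rewrite -[X in _ --> X]sum0.
  apply: (@cvg_big _ _ _ _ _ (@add_continuous R)) => // b _.
  by under eq_cvg do rewrite expr2; rewrite expr2; apply: cvgM; exact: W_lim.
Qed.

Lemma linear_system_eq0_backward (t1 : R) : (forall b, W b t1 = 0) ->
  forall t : R, 0 < t -> t <= t1 -> forall b, W b t = 0.
Proof.
move=> W_t1 t t0 tt1; apply: eq0_of_energy.
apply: (gronwall_eq0_backward (K := K) is_derive_energy _ _ t0 tt1).
- by move=> u u0; have /ler_normlP[] := norm_denergy_le u0; rewrite lerNl.
- by move=> u _; exact: energy_ge0.
- by rewrite /energy big1 // => b _; rewrite W_t1 expr0n.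
Qed.
End LinearSystem.

Section Tensors.
Variables (R : realType) (d : nat).
Implicit Types (a : mindex d) (w : 'I_d -> R).

Definition monomial w a : R := \prod_(i < d) w i ^+ a i.

Lemma monomial_incr w a l : monomial w (incr a l) = w l * monomial w a.
Proof.
rewrite /monomial (bigD1 l) //= [in RHS](bigD1 l) //= /incr eqxx exprS -mulrA.
by congr (_ * (_ * _)); apply: eq_bigr => i /negbTE ->.
Qed.

Lemma monomial_decr w a j :
  monomial w (decr a j) = w j ^+ (a j).-1 * \prod_(i < d | i != j) w i ^+ a i.
Proof.
rewrite /monomial (bigD1 j) //= /decr eqxx; congr (_ * _).
by apply: eq_bigr => i /negbTE ->.
Qed.

Lemma prod_rep w a : \prod_(i <- rep a) w i = monomial w a.
Proof.
rewrite /rep big_flatten /= big_map /monomial big_enum /=; apply: eq_bigr => k _.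
by rewrite big_nseq; elim: (a k) => //= n ->; rewrite exprS.
Qed.

Lemma size_rep a : size (rep a) = (\sum_(k < d) a k)%N.
Proof.
rewrite /rep size_flatten /shape -map_comp sumnE big_map big_enum /=.
by apply: eq_bigr => k _; rewrite /= size_nseq.
Qed.

Lemma count_rep a k : count_mem k (rep a) = a k.
Proof.
rewrite /rep count_flatten -map_comp sumnE big_map big_enum /= (bigD1 k) //= big1.
  by rewrite count_nseq /= eqxx mul1n addn0.
by move=> i ik; rewrite count_nseq /= (negbTE ik).
Qed.

Definition mindex_of (s : seq 'I_d) : mindex d := fun k => count_mem k s.

Lemma perm_rep_mindex_of s : perm_eq s (rep (mindex_of s)).
Proof. by apply/allP => k _ /=; rewrite count_rep. Qed.

Lemma in_S_mindex_of s : in_S (size s) (mindex_of s).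
Proof. by rewrite /in_S -size_rep (perm_size (perm_rep_mindex_of s)). Qed.

Lemma symtensor_coord_ext m (A B : tensor R d) : symtensor m A -> symtensor m B ->
  (forall a, in_S m a -> tcoord A a = tcoord B a) -> A = B.
Proof.
move=> [A0 Aperm] [B0 Bperm] AB; apply/funext => s.
have [sm|sm] := eqVneq (size s) m; last by rewrite A0 ?B0 //; apply/eqP.
rewrite (Aperm _ _ (perm_rep_mindex_of s)) (Bperm _ _ (perm_rep_mindex_of s)).
by apply: AB; rewrite -sm; exact: in_S_mindex_of.
Qed.

Lemma decomp_symtensor m n (lam : 'I_n -> R) (v : 'I_n -> 'I_d -> R) :
  symtensor m (decomp m lam v).
Proof.
split=> [s /eqP/negbTE sm | s t st]; rewrite /decomp.
  by rewrite big1 // => k _; rewrite /tpow sm mulr0.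
by apply: eq_bigr => k _; rewrite /tpow (perm_size st) (perm_big _ st).
Qed.

Lemma tcoord_decomp m n (lam : 'I_n -> R) (v : 'I_n -> 'I_d -> R) a : in_S m a ->
  tcoord (decomp m lam v) a = \sum_(k < n) lam k * monomial (v k) a.
Proof.
move=> Sa; apply: eq_bigr => k _.
by rewrite /tpow size_rep Sa eqxx prod_rep.
Qed.

Lemma in_S_le m a i : in_S m a -> (a i <= m)%N.
Proof. by rewrite /in_S (bigD1 i) //= => <-; exact: leq_addr. Qed.

Lemma in_S_shift m a j l : in_S m a -> (0 < a j)%N -> in_S m (incr (decr a j) l).
Proof.
rewrite /in_S => <- aj.
have sum_incr b : (\sum_(k < d) incr b l k = (\sum_(k < d) b k).+1)%N.
  rewrite (bigD1 l) //= [in RHS](bigD1 l) //= /incr eqxx -addSn.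
  by congr (_ + _)%N; apply: eq_bigr => i /negbTE ->.
have sum_decr : ((\sum_(k < d) decr a j k).+1 = \sum_(k < d) a k)%N.
  rewrite (bigD1 j) //= [in RHS](bigD1 j) //= /decr eqxx -addSn prednK //.
  by congr (_ + _)%N; apply: eq_bigr => i /negbTE ->.
by rewrite sum_incr sum_decr.
Qed.

Definition of_bounded m (b : {ffun 'I_d -> 'I_m.+1}) : mindex d := fun i => b i.
Definition to_bounded m a : {ffun 'I_d -> 'I_m.+1} := [ffun i => inord (a i)].

Lemma to_boundedK m a : in_S m a -> of_bounded (to_bounded m a) = a.
Proof.
move=> Sa; apply/funext => i; rewrite /of_bounded ffunE inordK //.
by rewrite ltnS; exact: in_S_le Sa.
Qed.
End Tensors.

Lemma lin_map_of_relations (F : fieldType) n d (V V0 : 'I_n -> 'I_d -> F) :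
  (forall c : 'I_n -> F, (forall j, \sum_k c k * V k j = 0) ->
     forall i, \sum_k c k * V0 k i = 0) ->
  exists P : 'I_d -> 'I_d -> F, forall k i, \sum_j P i j * V k j = V0 k i.
Proof.
move=> rel.
pose M : 'M[F]_(n, d) := \matrix_(k, j) V k j.
pose M0 : 'M[F]_(n, d) := \matrix_(k, j) V0 k j.
have : (M0^T <= M^T)%MS.
  rewrite submxE; move: (cokermx M^T) (mulmx_coker M^T) => K MK.
  have K_M0 : K^T *m M0 = 0.
    apply/matrixP => r i; rewrite !mxE; under eq_bigr do rewrite !mxE.
    apply: (rel (fun k => K k r)) => j.
    have := congr1 (fun A : 'M[F]_(d, n) => A j r) MK; rewrite !mxE => MKjr.
    by apply: etrans MKjr; apply: eq_bigr => k _; rewrite !mxE mulrC.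
  by rewrite -[M0^T *m K]trmxK trmx_mul trmxK K_M0 trmx0.
case/submxP => P MP; exists (fun i j => P i j) => k i.
have := congr1 (fun A : 'M[F]_(d, n) => A i k) MP; rewrite !mxE => ->.
by apply: eq_bigr => j _; rewrite !mxE.
Qed.

Section LinearImage.
Variables (R : realType) (d : nat) (P : 'I_d -> 'I_d -> R).

Definition lin_image n (w : 'I_n -> 'I_d -> R) : 'I_n -> 'I_d -> R :=
  fun k i => \sum_j P i j * w k j.

Lemma decomp_lin_image m n (lam : 'I_n -> R) w (x : seq 'I_d) (x0 : 'I_d) : size x = m ->
  decomp m lam (lin_image w) x =
  \sum_(f : {ffun 'I_m -> 'I_d}) (\prod_(r < m) P (nth x0 x r) (f r)) * decomp m lam w (codom f).
Proof.
move=> sx.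
have tpow_codom k (f : {ffun 'I_m -> 'I_d}) : tpow m (w k) (codom f) = \prod_(r < m) w k (f r).
  by rewrite /tpow size_codom card_ord eqxx big_image.
rewrite /decomp; under [RHS]eq_bigr do rewrite mulr_sumr.
rewrite [RHS]exchange_big /=; apply: eq_bigr => k _.
under [RHS]eq_bigr do rewrite tpow_codom.
rewrite /tpow sx eqxx (big_nth x0) sx big_mkord /lin_image bigA_distr_bigA mulr_sumr /=.
by apply: eq_bigr => f _; rewrite big_split /= mulrCA.
Qed.

Lemma decomp_lin_image_eq m n n' (lam : 'I_n -> R) w (lam' : 'I_n' -> R) w' :
  decomp m lam w = decomp m lam' w' ->
  decomp m lam (lin_image w) = decomp m lam' (lin_image w').
Proof.
move=> e; apply/funext => x.
have [sx|/eqP sx] := eqVneq (size x) m; last first.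
  by rewrite !(decomp_symtensor _ _ _).1.
case: x sx => [|x0 x] sx; last by rewrite !(decomp_lin_image _ _ x0 sx) e.
have tpow_nil n'' (u : 'I_n'' -> 'I_d -> R) k : tpow m (lin_image u k) [::] = tpow m (u k) [::].
  by rewrite /tpow !big_nil.
rewrite /decomp (eq_bigr (fun k => lam k * tpow m (w k) [::])); last by move=> k _; rewrite tpow_nil.
rewrite [RHS](eq_bigr (fun k => lam' k * tpow m (w' k) [::])); last by move=> k _; rewrite tpow_nil.
exact: (congr1 (fun A : tensor R d => A [::]) e).
Qed.
End LinearImage.

Section LinearFlow.
Variables (R : realType) (d : nat) (C : 'M[R]_d).

Definition solves_vec_ode (w : R -> 'I_d -> R) (w0 : 'I_d -> R) : Prop :=
  forall i, (forall t : R, 0 < t -> is_derive t 1 (fun u => w u i) (vec_rhs C (w t) i)) /\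
            w x i @[x --> 0^'+] --> w0 i.

Definition solves_tensor_ode m (D : R -> tensor R d) (A0 : tensor R d) : Prop :=
  forall a : mindex d, in_S m a ->
    (forall t : R, 0 < t -> is_derive t 1 (fun u => tcoord (D u) a) (tens_rhs C (D t) a)) /\
    tcoord (D x) a @[x --> 0^'+] --> tcoord A0 a.

Lemma is_derive_monomial (w : R -> 'I_d -> R) (a : mindex d) (t : R) :
  (forall j, is_derive t 1 (fun u => w u j) (vec_rhs C (w t) j)) ->
  is_derive t 1 (fun u => monomial (w u) a)
    (- \sum_(j < d) \sum_(l < d) (a j)%:R * C j l * monomial (w t) (incr (decr a j) l)).
Proof.
move=> w'.
have wX i : is_derive t 1 (fun u => w u i ^+ a i)
    (((a i)%:R * w t i ^+ (a i).-1) *: vec_rhs C (w t) i).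
  have -> : (fun u => w u i ^+ a i) = (fun u => w u i) ^+ a i.
    by apply/funext => u; rewrite exprfctE.
  exact: is_deriveX.
apply: is_derive_eq; first exact: is_derive_bigprod (index_enum_uniq 'I_d) wX.
rewrite -sumrN; apply: eq_bigr => j _.
rewrite /vec_rhs /GRing.scale /= -!sumrN mulr_sumr mulr_suml; apply: eq_bigr => l _.
by rewrite monomial_incr monomial_decr; ring.
Qed.

Lemma solves_tensor_ode_decomp m n (lam : 'I_n -> R) (v : 'I_n -> R -> 'I_d -> R) v0 :
  (forall k, solves_vec_ode (v k) (v0 k)) ->
  solves_tensor_ode m (fun u => decomp m lam (fun k => v k u)) (decomp m lam v0).
Proof.
move=> sol a Sa; rewrite tcoord_decomp //.
under [fun u => _]funext => u do rewrite tcoord_decomp //.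
split=> [t t0|].
  apply: is_derive_eq.
    apply: is_derive_bigsum => k; apply: is_deriveMl.
    by apply: is_derive_monomial => j; exact: (sol k j).1.
  rewrite /tens_rhs; under eq_bigr do rewrite mulrN; rewrite sumrN; congr (- _).
  under eq_bigr do rewrite mulr_sumr; rewrite exchange_big; apply: eq_bigr => j _.
  under eq_bigr do rewrite mulr_sumr; rewrite exchange_big; apply: eq_bigr => l _.
  have [aj0|aj] := posnP (a j).
    by rewrite aj0 !mul0r big1 // => k _; rewrite mul0r mulr0.
  rewrite (tcoord_decomp _ _ (in_S_shift l Sa aj)) mulr_sumr.
  by apply: eq_bigr => k _; rewrite mulrCA.
apply: (@cvg_big _ _ _ _ _ (@add_continuous R)) => // k _; apply: cvgMl_tmp.
apply: (@cvg_big _ _ _ _ _ (@mul_continuous R)) => // i _.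
by apply: (continuous_cvg _ (@exprn_continuous R (a i) (v0 k i)) (sol k i).2).
Qed.

Lemma tens_rhsB (A B : tensor R d) a :
  tens_rhs C A a - tens_rhs C B a = tens_rhs C (fun x => A x - B x) a.
Proof.
rewrite /tens_rhs -opprD -sumrB; congr (- _); apply: eq_bigr => j _.
by rewrite -sumrB; apply: eq_bigr => l _; rewrite -mulrBr.
Qed.

Lemma norm_tens_rhs_le (A : tensor R d) a :
  `|tens_rhs C A a| <= \sum_(p : 'I_d * 'I_d)
     (a p.1)%:R * `|C p.1 p.2| * `|tcoord A (incr (decr a p.1) p.2)|.
Proof.
rewrite normrN pair_bigA; apply: le_trans (ler_norm_sum _ _ _) _.
by apply: ler_sum => p _; rewrite !normrM ger0_norm.
Qed.

Lemma tensor_ode_unique m (D1 D2 : R -> tensor R d) (A0 : tensor R d) :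
  (forall t : R, 0 < t -> symtensor m (D1 t)) ->
  (forall t : R, 0 < t -> symtensor m (D2 t)) ->
  solves_tensor_ode m D1 A0 -> solves_tensor_ode m D2 A0 ->
  forall t : R, 0 < t -> D1 t = D2 t.
Proof.
move=> sym1 sym2 sol1 sol2 t t0.
(* S^(m) sits inside the finite type of maps 'I_d -> 'I_m.+1, over which the
   energy is a finite sum; W is padded with 0 outside S^(m). *)
pose inS (b : {ffun 'I_d -> 'I_m.+1}) := (\sum_(k < d) of_bounded b k == m)%N.
pose Dt u x := D1 u x - D2 u x.
pose W b u := if inS b then tcoord (Dt u) (of_bounded b) else 0.
pose dW b u := if inS b then tens_rhs C (Dt u) (of_bounded b) else 0.
pose N (b : {ffun 'I_d -> 'I_m.+1}) (p : 'I_d * 'I_d) :=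
  (of_bounded b p.1)%:R * `|C p.1 p.2|.
pose g (b : {ffun 'I_d -> 'I_m.+1}) (p : 'I_d * 'I_d) :=
  to_bounded m (incr (decr (of_bounded b) p.1) p.2).
have W_eq0 : forall b, W b t = 0.
  apply: (linear_system_eq0 (W := W) (dW := dW) (N := N) (g := g) _ _ _ _ t0).
  - move=> u u0 b; rewrite /W /dW; case: ifP => [/eqP Sb|_]; last exact: is_derive_cst.
    rewrite -tens_rhsB; exact: is_deriveB ((sol1 _ Sb).1 u u0) ((sol2 _ Sb).1 u u0).
  - by move=> b p; rewrite mulr_ge0.
  - move=> u u0 b; rewrite /dW; case: ifP => [/eqP Sb|_]; last first.
      by rewrite normr0 sumr_ge0 // => p _; rewrite !mulr_ge0.
    apply: le_trans (norm_tens_rhs_le _ _) _; apply: ler_sum => p _.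
    have [b0|bj] := posnP (of_bounded b p.1); first by rewrite /N b0 !mul0r.
    have Sg := in_S_shift p.2 Sb bj.
    by rewrite /N /W /g /inS to_boundedK // Sg eqxx.
  - move=> b; rewrite /W; case: (boolP (inS b)) => [/eqP Sb|_]; last exact: cvg_cst.
    by have := cvgB (sol1 _ Sb).2 (sol2 _ Sb).2; rewrite subrr; apply.
apply: symtensor_coord_ext (sym1 t t0) (sym2 t t0) _ => a Sa.
apply/eqP; rewrite -subr_eq0; apply/eqP.
by have := W_eq0 (to_bounded m a); rewrite /W /inS to_boundedK // Sa eqxx.
Qed.

Lemma solves_vec_ode_lincomb n (c : 'I_n -> R) (v : 'I_n -> R -> 'I_d -> R) v0 :
  (forall k, solves_vec_ode (v k) (v0 k)) ->
  solves_vec_ode (fun u i => \sum_k c k * v k u i) (fun i => \sum_k c k * v0 k i).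
Proof.
move=> sol i; split=> [t t0|].
  apply: is_derive_eq.
    by apply: is_derive_bigsum => k; apply: is_deriveMl; exact: (sol k i).1.
  rewrite /vec_rhs; under eq_bigr do rewrite mulrN; rewrite sumrN; congr (- _).
  under eq_bigr do rewrite mulr_sumr; rewrite exchange_big; apply: eq_bigr => j _.
  by rewrite mulr_sumr; apply: eq_bigr => k _; rewrite mulrCA.
apply: (@cvg_big _ _ _ _ _ (@add_continuous R)) => // k _.
exact: cvgMl_tmp (sol k i).2.
Qed.

Lemma solves_vec_ode_eq0 (w : R -> 'I_d -> R) w0 (t : R) : solves_vec_ode w w0 ->
  0 < t -> (forall i, w t i = 0) -> forall i, w0 i = 0.
Proof.
move=> sol t0 wt0 i.
have w_eq0 : forall u : R, 0 < u -> u <= t -> w u i = 0.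
  move=> u u0 ut; apply: (linear_system_eq0_backward (W := fun i u => w u i)
    (dW := fun i u => vec_rhs C (w u) i) (N := fun i j => `|C i j|) (g := fun _ j => j)) => //.
  - by move=> r r0 j; exact: (sol j).1.
  - move=> r r0 j; rewrite /vec_rhs normrN; apply: le_trans (ler_norm_sum _ _ _) _.
    by apply: ler_sum => l _; rewrite normrM.
have w_lim0 : w x i @[x --> 0^'+] --> 0.
  apply: cvg_near_cst.
  apply: filterS (filterI (nbhs_right_gt 0) (nbhs_right_lt t0)) => u [u0 ut].
  exact: w_eq0 u0 (ltW ut).
exact: cvg_unique _ (sol i).2 w_lim0.
Qed.
Lemma has_symrank_flow m n (lam : 'I_n -> R) (v : 'I_n -> R -> 'I_d -> R) v0 (t : R) :
  (forall k, solves_vec_ode (v k) (v0 k)) -> 0 < t ->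
  has_symrank m (decomp m lam v0) n -> has_symrank m (decomp m lam (fun k => v k t)) n.
Proof.
move=> sol t0 [_ minimal]; split; first by exists lam, (fun k => v k t).
move=> n' lam' w' e.
have [P vP] : exists P, forall k i, \sum_j P i j * v k t j = v0 k i.
  apply: lin_map_of_relations => c rel.
  exact: solves_vec_ode_eq0 (solves_vec_ode_lincomb c sol) t0 rel.
apply: (minimal n' lam' (lin_image P w')).
rewrite -(decomp_lin_image_eq P e); congr decomp.
by apply/funext => k; apply/funext => i; rewrite /lin_image vP.
Qed.
End LinearFlow.

Theorem theorem5p19 (R : realType) (d m s : nat) (C : 'M[R]_d)
    (lam : 'I_s -> R) (v0 : 'I_s -> 'I_d -> R) (D0 : tensor R d)
    (D : R -> tensor R d) (v : 'I_s -> R -> 'I_d -> R) :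
  conditionA C ->
  (1 <= m)%N ->
  symtensor m D0 ->
  D0 = decomp m lam v0 ->
  has_symrank m D0 s ->
  (* D(t), t >= 0, solves the tensor ODE with D(0) = D0 *)
  (forall t : R, 0 <= t -> symtensor m (D t)) ->
  D 0 = D0 ->
  (forall a : mindex d, in_S m a ->
     (forall t : R, 0 < t ->
        is_derive t 1 (fun u : R => tcoord (D u) a) (tens_rhs C (D t) a)) /\
     (tcoord (D x) a @[x --> (0:R)^'+] --> tcoord D0 a)) ->
  (* v_k(t) solves dv_k/dt = - C v_k, v_k(0) = v_k *)
  (forall k, v k 0 = v0 k) ->
  (forall k (i : 'I_d),
     (forall t : R, 0 < t ->
        is_derive t 1 (fun u : R => v k u i) (vec_rhs C (v k t) i)) /\
     (v k x i @[x --> (0:R)^'+] --> v k 0 i)) ->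
  forall t : R, 0 < t ->
    D t = decomp m lam (fun k => v k t) /\ has_symrank m (D t) s.
Proof.
move=> _ _ _ -> rank0 symD _ solD v_0 solv t t0.
have solv0 k : solves_vec_ode C (v k) (v0 k) by rewrite -v_0; exact: solv.
have Dt : D t = decomp m lam (fun k => v k t).
  apply: (tensor_ode_unique _ _ solD (solves_tensor_ode_decomp (m := m) lam solv0) t0).
  - by move=> u u0; exact: symD (ltW u0).
  - by move=> u _; exact: decomp_symtensor.
by rewrite Dt; split => //; exact: has_symrank_flow.
Qed.
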